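(* Let $S$ be a finite $2$-group and suppose there are $A,B\in\mathcal{A}(S)$ with $AB=S$. If $C_B(a)=A\cap B$ for every $a\in A\setminus(A\cap B)$, then $\mathcal{A}(S)=\{A,B\}$ and every involution of $S$ lies in $A\cup B$.
   Context: For a $p$-group $S$, $\mathcal{A}(S)$ denotes the set of elementary abelian subgroups of $S$ of maximal rank (maximal order). *)

From mathcomp Require Import all_boot all_fingroup all_solvable.
Set Implicit Arguments. Unset Strict Implicit. Unset Printing Implicit Defensive.
Local Open Scope group_scope.

Definition maxElemAb (gT : finGroupType) (p : nat) (S : {set gT}) :
  {set {group gT}} := 'E_p^('r_p(S))(S).

From mathcomp Require Import all_boot all_fingroup all_solvable.
Set Implicit Arguments. Unset Strict Implicit. Unset Printing Implicit Defensive.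
Local Open Scope group_scope.

(* Write an element of S = AB as x = ab. If x, a and b are involutions, then a
   and b commute; so either a lies in B, or b centralizes a in B and the
   hypothesis puts b in A. Hence every involution lies in A or B. An
   elementary abelian subgroup E of S then lies in the union of the two
   subgroups A and B, hence in one of them, and if E has maximal rank it
   equals that one by comparing orders. *)

Lemma commute_of_sqr1 (gT : finGroupType) (a b : gT) :
  a ^+ 2 = 1 -> b ^+ 2 = 1 -> (a * b) ^+ 2 = 1 -> commute a b.
Proof.
have invE (x : gT) : x ^+ 2 = 1 -> x^-1 = x.
  by move=> x2; apply/eqP; rewrite eq_invg_mul -x2 expgS expg1.
by move=> /invE ia /invE ib /invE iab; rewrite /commute -iab invMg ia ib.
Qed.

Lemma group_sub_setU (gT : finGroupType) (E A B : {group gT}) :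
  E \subset A :|: B -> E \subset A \/ E \subset B.
Proof.
move=> sEAB; have inAB y : y \in E -> y \in A :|: B := subsetP sEAB y.
have [sEA | /subsetPn[e eE eA]] := boolP (E \subset A); [by left | right].
have eB : e \in B by have := inAB e eE; rewrite inE (negbTE eA).
apply/subsetP => y yE; have [yA | yA] := boolP (y \in A); last first.
  by have := inAB y yE; rewrite inE (negbTE yA).
have := inAB _ (groupM eE yE); rewrite inE (groupMr _ yA) (negbTE eA) /=.
by rewrite groupMl.
Qed.

Lemma pnElem_sub_eq (gT : finGroupType) p n (G E F : {group gT}) :
  E \in 'E_p^n(G) -> F \in 'E_p^n(G) -> E \subset F -> E = F.
Proof.
move=> EG FG sEF; apply: group_inj; apply/eqP.
by rewrite eqEcard sEF (card_pnElem EG) (card_pnElem FG) leqnn.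
Qed.

Section ExponentTwoProduct.

Variables (gT : finGroupType) (A B : {group gT}).
Hypotheses (expA : exponent A %| 2) (expB : exponent B %| 2).
Hypothesis cent1_AB : forall a, a \in A :\: (A :&: B) -> 'C_B[a] = A :&: B.

Lemma sqr1_mulg_in_setU x : x \in A * B -> x ^+ 2 = 1 -> x \in A :|: B.
Proof.
case/mulsgP=> a b aA bB -> x2.
have cab : commute a b.
  by apply: commute_of_sqr1 => //; [apply: (exponentP expA) | apply: (exponentP expB)].
have [aB | aB] := boolP (a \in B); first by rewrite inE (groupM aB bB) orbT.
have : b \in 'C_B[a] by rewrite inE bB; apply/cent1P.
rewrite cent1_AB; last by rewrite !inE aA aB.
by case/setIP=> bA _; rewrite inE (groupM aA bA).
Qed.

Lemma exponent2_sub_setU (E : {group gT}) :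
  E \subset A * B -> exponent E %| 2 -> E \subset A \/ E \subset B.
Proof.
move=> sEAB /exponentP expE; apply: group_sub_setU; apply/subsetP=> e eE.
by rewrite sqr1_mulg_in_setU ?expE // (subsetP sEAB).
Qed.

End ExponentTwoProduct.

Lemma abelem2_exponent (gT : finGroupType) (G : {group gT}) :
  2.-abelem G -> exponent G %| 2.
Proof. by rewrite abelemE // => /andP[]. Qed.

Theorem mainTheorem5 (gT : finGroupType) (S A B : {group gT}) :
  2.-group S ->
  A \in maxElemAb 2 S -> B \in maxElemAb 2 S ->
  A * B = S ->
  (forall a, a \in A :\: (A :&: B) -> 'C_B[a] = A :&: B) ->
  maxElemAb 2 S = [set A; B] /\
  (forall x, x \in S -> #[x] = 2%N -> x \in A :|: B).
Proof.
move=> _ AS BS defS cent1_AB.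
have [_ /abelem2_exponent expA _] := pnElemP AS.
have [_ /abelem2_exponent expB _] := pnElemP BS.
split=> [|x xS ox]; last first.
  by apply: sqr1_mulg_in_setU; rewrite ?defS // -ox expg_order.
apply/setP=> E; rewrite in_set2; apply/idP/orP=> [ES | [] /eqP-> //].
have [sES /abelem2_exponent expE _] := pnElemP ES.
have sEAB : E \subset A * B by rewrite defS.
have [sEA | sEB] := exponent2_sub_setU expA expB cent1_AB sEAB expE.
- by left; apply/eqP/(pnElem_sub_eq ES AS).
- by right; apply/eqP/(pnElem_sub_eq ES BS).
Qed.
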